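(* For integers $n\ge j\ge1$ and $m\ge0$ let $T_{n,j,m}$ be the number of ordered increasing $k$-trees of size $n$ in which node $j$ has out-degree $m$. Then $T_{n,j,m}=((k+1)n-km-2k)\,T_{n-1,j,m}+km\,T_{n-1,j,m-1}$ for $n>j$, and the generating function $T^{[j]}(z,v):=\sum_{n\ge j}\sum_{m\ge0}T_{n,j,m}\frac{z^{n-j}}{(n-j)!}v^m$ is given by \[ T^{[j]}(z,v)=\frac{T_j}{\Big(1-v\big(1-(1-(k+1)z)^{\frac{k}{k+1}}\big)\Big)\,(1-(k+1)z)^{\frac{kj-k+j+1}{k+1}}}, \] where $T_j=\prod_{\ell=0}^{j-1}(1+(k+1)\ell)$ is the number of ordered increasing $k$-trees of size $j$.
   Context: Fix an integer $k\ge1$. An ordered increasing $k$-tree of size $n\ge0$ is built as follows. Start with the root-clique $K_0$: $k$ pairwise adjacent vertices labelled $0_1,\dots,0_k$ (the root nodes; each label $0_\ell$ has value $0$). For $j=1,\dots,n$ in turn, node $j$ is inserted by choosing a currently existing $k$-clique $K$ and attaching $j$ to it, i.e. adding edges from $j$ to all $k$ vertices of $K$; $j$ is then a child of $K$ and the vertices of $K$ are the parents of $j$. The $k$-cliques available for attachment are the root-clique and, for every previously inserted node $x$ attached to a clique $K'$, the $k$ cliques $\{x\}\cup(K'\setminus\{w\})$, $w\in K'$. The children of each $k$-clique are linearly ordered: if $K$ currently has $d^+(K)$ children, there are $d^+(K)+1$ positions at which the new child may be placed, and the choice of position is part of the structure; distinct sequences of choices give distinct trees. The out-degree of a node $u$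 is the number of nodes having $u$ as a parent. Convention: $T_{n,j,m}=0$ for $m<0$, $T_{j,j,0}=T_j$ and $T_{j,j,m}=0$ for $m>0$. *)

From HB Require Import structures.
From mathcomp Require Import all_boot all_order all_algebra.
Set Implicit Arguments. Unset Strict Implicit. Unset Printing Implicit Defensive.
Import Order.TTheory GRing.Theory Num.Theory.

(* ---------- Ordered increasing k-trees, encoded by their choice sequences ----------
   Vertices: (false, l) is the root node 0_(l+1) (l < k); (true, x) is node x (x >= 1).
   A tree of size n is the sequence t of its n insertion choices:
   nth t (x-1) = (c, p) means node x is attached to clique number c and placed at
   position p (0 <= p <= current number of children of that clique).
   Cliques are numbered in order of creation: clique 0 is the root clique, and
   node x creates the k cliques numbered 1 + k(x-1) + w (w < k), namely
   {x} u (K' \ {w-th vertex of K'}) where K' is the clique x was attached to. *)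

Definition vtx := (bool * nat)%type.

Definition root_clique (k : nat) : seq vtx := [seq (false, l) | l <- iota 0 k].

Fixpoint cliques (k : nat) (t : seq (nat * nat)) (x : nat) : seq (seq vtx) :=
  match x with
  | 0 => [:: root_clique k]
  | x'.+1 =>
      let st := cliques k t x' in
      let K := nth [::] st (nth (0, 0) t x').1 in
      st ++ [seq (true, x'.+1) :: (take w K ++ drop w.+1 K) | w <- iota 0 k]
  end.

Definition nchildren (t : seq (nat * nat)) (c : nat) : nat :=
  count (fun q => q.1 == c) t.

Fixpoint trees (k n : nat) : seq (seq (nat * nat)) :=
  match n with
  | 0 => [:: [::]]
  | n'.+1 =>
      flatten [seq [seq rcons t (c, p) | c <- iota 0 (1 + k * n'),
                                        p <- iota 0 (nchildren t c).+1]
              | t <- trees k n']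
  end.

Definition parents (k : nat) (t : seq (nat * nat)) (x : nat) : seq vtx :=
  nth [::] (cliques k t (size t)) (nth (0, 0) t x.-1).1.

Definition outdeg (k : nat) (t : seq (nat * nat)) (u : vtx) : nat :=
  count (fun x => u \in parents k t x) (iota 1 (size t)).

Definition Tcount (k n : nat) : nat := size (trees k n).

Definition Tnjm (k n j m : nat) : nat :=
  count (fun t => outdeg k t (true, j) == m) (trees k n).

Local Open Scope ring_scope.

Definition fps := nat -> rat.

Definition fone : fps := fun n => (n == 0%N)%:R.
Definition fmul (f g : fps) : fps := fun n => \sum_(i < n.+1) f i * g (n - i)%N.
Definition fpow (f : fps) (m : nat) : fps := iter m (fmul f) fone.

Definition gbinom (a : rat) (n : nat) : rat :=
  (\prod_(i < n) (a - i%:R)) / n`!%:R.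

(* the binomial series (1 - c z)^a *)
Definition powS (c a : rat) : fps := fun n => gbinom a n * (- c) ^+ n.

From HB Require Import structures.
From mathcomp Require Import all_boot all_order all_algebra zify ring.
Set Implicit Arguments. Unset Strict Implicit. Unset Printing Implicit Defensive.
Import Order.TTheory GRing.Theory Num.Theory.

(* Inserting node n+1 into a tree of size n means choosing one of its 1 + kn
   cliques and one of the (children + 1) positions under it: 1 + (k+1)n choices
   in all.  If node j has out-degree d, it lies in exactly k + (k-1)d cliques (the
   k it creates, plus k-1 new ones for each child), and the positions under these
   cliques number d + k + (k-1)d = k(d+1); these are exactly the choices raising
   the out-degree of j, which gives the recurrence.
   With c = k+1, b = k/(k+1) and e = -(kj-k+j+1)/(k+1), the series
   G_m = (1 - (1-cz)^b)^m (1-cz)^e satisfy (1-cz) G_m' = cbm G_(m-1) + (-ce-cbm) G_m,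
   since (1-cz) ((1-cz)^a)' = -ca (1-cz)^a.  Reading off coefficients, N! T_j [z^N] G_m
   obeys the same recurrence in N as T_(j+N,j,m), with the same initial values.
   The differential equation is checked on polynomial truncations of the series,
   where the derivative of a product is available. *)

Lemma subseq_take_dropS (T : eqType) (s : seq T) w : subseq (take w s ++ drop w.+1 s) s.
Proof.
rewrite -{3}(cat_take_drop w s) cat_subseq //.
by rewrite -addn1 addnC -drop_drop drop_subseq.
Qed.

Lemma mem_drop_uniq (T : eqType) (s : seq T) x n : uniq s -> x \in s ->
  (x \in drop n s) = (n <= index x s).
Proof.
move=> uniq_s s_x.
have : x \in take n s ++ drop n s by rewrite cat_take_drop.
rewrite mem_cat in_take //.
have : uniq (take n s ++ drop n s) by rewrite cat_take_drop.
rewrite cat_uniq => /and3P [_ /hasPn disj _].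
case: ltnP => [lt_xn _ | // ].
by apply/negP => /disj; rewrite /= in_take // lt_xn.
Qed.

Lemma count_mem_take_dropS (T : eqType) (s : seq T) x : uniq s ->
  count (fun w => x \in take w s ++ drop w.+1 s) (iota 0 (size s)) = (x \in s) * (size s).-1.
Proof.
move=> uniq_s; have [s_x | s'x] := boolP (x \in s); last first.
  rewrite mul0n; apply/eqP; rewrite -leqn0 leqNgt -has_count; apply/hasP => -[w _].
  by move/(mem_subseq (subseq_take_dropS s w)); apply/negP.
rewrite mul1n (eq_in_count (a2 := predC1 (index x s))); last first.
  by move=> w _; rewrite mem_cat in_take // mem_drop_uniq //= neq_ltn orbC.
have := count_predC (pred1 (index x s)) (iota 0 (size s)).
rewrite size_iota (count_uniq_mem _ (iota_uniq 0 _)) mem_iota add0n index_mem s_x /=.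
by move=> E; rewrite -[in RHS]E.
Qed.

Lemma count_sumE (T : Type) (a : pred T) (s : seq T) : count a s = \sum_(x <- s) a x.
Proof. by rewrite -sumn_count sumnE big_map. Qed.

Lemma sum_nat_const_seq (T : Type) (s : seq T) n : \sum_(x <- s) n = size s * n.
Proof. by elim: s => [|x s IH]; rewrite ?big_nil ?big_cons //= IH mulSn. Qed.

Definition cur_cliques (k : nat) (t : seq (nat * nat)) : seq (seq vtx) :=
  cliques k t (size t).

Definition new_cliques (k : nat) (t : seq (nat * nat)) (c : nat) : seq (seq vtx) :=
  let K := nth [::] (cur_cliques k t) c in
  [seq (true, (size t).+1) :: (take w K ++ drop w.+1 K) | w <- iota 0 k].

Definition choices_bounded (k : nat) (t : seq (nat * nat)) : bool :=
  all (fun q => q.1 < 1 + k * size t) t.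

Lemma size_cliques k t x : size (cliques k t x) = 1 + k * x.
Proof.
elim: x => [|x IH] /=; first by rewrite muln0.
by rewrite size_cat IH size_map size_iota; lia.
Qed.

Lemma cliques_rcons k t q x : x <= size t -> cliques k (rcons t q) x = cliques k t x.
Proof.
elim: x => [|x IH] lt_xt //=.
by rewrite IH ?(ltnW lt_xt) // nth_rcons lt_xt.
Qed.

Lemma cur_cliques_rcons k t c p :
  cur_cliques k (rcons t (c, p)) = cur_cliques k t ++ new_cliques k t c.
Proof. by rewrite /cur_cliques size_rcons /= cliques_rcons // nth_rcons ltnn eqxx. Qed.

Lemma outdeg_countE k t u :
  outdeg k t u = count (fun q => u \in nth [::] (cur_cliques k t) q.1) t.
Proof.
set P := fun q => _.
rewrite /outdeg -[in RHS](mkseq_nth (0, 0) t) /mkseq count_map (iotaDl 1 0) count_map.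
by apply: eq_count => x; rewrite /= /parents /P add1n.
Qed.

Lemma outdeg_rcons k t c p u : choices_bounded k t -> c < 1 + k * size t ->
  outdeg k (rcons t (c, p)) u = outdeg k t u + (u \in nth [::] (cur_cliques k t) c).
Proof.
move=> /all_nthP bounded lt_c.
rewrite !outdeg_countE cur_cliques_rcons -cats1 count_cat /= addn0.
rewrite nth_cat size_cliques lt_c; congr (_ + _).
apply: eq_in_count => q /(nthP (0, 0)) [i lt_i <-].
by rewrite nth_cat size_cliques (bounded (0, 0) i lt_i).
Qed.

Definition wf_clique (k n : nat) (K : seq vtx) : bool :=
  [&& size K == k, uniq K & all (fun v : vtx => ~~ v.1 || (v.2 <= n)) K].

Definition wf_tree (k : nat) (t : seq (nat * nat)) : bool :=
  all (wf_clique k (size t)) (cur_cliques k t).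

Lemma wf_tree_nil k : wf_tree k [::].
Proof.
rewrite /wf_tree /= andbT /wf_clique /root_clique size_map size_iota eqxx /=.
rewrite map_inj_uniq ?iota_uniq; last by move=> x y [].
by apply/allP => v /mapP [x _ ->].
Qed.

Lemma wf_clique_nth k t c : wf_tree k t -> c < 1 + k * size t ->
  wf_clique k (size t) (nth [::] (cur_cliques k t) c).
Proof. by move=> /allP wf_t lt_c; apply/wf_t/mem_nth; rewrite size_cliques. Qed.

Lemma wf_clique_notin k n K j : wf_clique k n K -> n < j -> (true, j) \notin K.
Proof. by move=> /and3P [_ _ /allP le_K] lt_nj; apply/negP => /le_K; rewrite leqNgt lt_nj. Qed.

Lemma wf_clique_le k n n' K : n <= n' -> wf_clique k n K -> wf_clique k n' K.
Proof.
move=> le_nn' /and3P [size_K uniq_K le_K]; rewrite /wf_clique size_K uniq_K /=.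
apply: sub_all le_K => v /orP [-> //|le_v].
by rewrite (leq_trans le_v le_nn') orbT.
Qed.

Lemma wf_tree_rcons k t c p : wf_tree k t -> c < 1 + k * size t ->
  wf_tree k (rcons t (c, p)).
Proof.
move=> wf_t lt_c; rewrite /wf_tree cur_cliques_rcons all_cat size_rcons.
apply/andP; split; first by apply: sub_all wf_t => K; apply: wf_clique_le.
have /and3P [/eqP size_K uniq_K le_K] := wf_clique_nth wf_t lt_c.
apply/allP => K' /mapP [w]; rewrite mem_iota add0n => /andP [_ lt_w] ->.
set K := nth [::] _ c in size_K uniq_K le_K *.
have sub_K := subseq_take_dropS K w.
apply/and3P; split.
- by rewrite /= size_cat size_take size_drop size_K lt_w; lia.
- rewrite /= (subseq_uniq sub_K) // andbT.
  by apply: contraT => /negbNE /(mem_subseq sub_K) /(allP le_K); rewrite /= ltnn.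
- rewrite /= leqnn; apply/allP => v /(mem_subseq sub_K) /(allP le_K) /orP [-> //|le_v].
  by rewrite ltnW ?orbT.
Qed.

Lemma count_mem_new_cliques k t c x : wf_tree k t -> c < 1 + k * size t ->
  count (fun K => x \in K) (new_cliques k t c) =
  if x == (true, (size t).+1) then k else (x \in nth [::] (cur_cliques k t) c) * k.-1.
Proof.
move=> wf_t lt_c; have /and3P [/eqP size_K uniq_K _] := wf_clique_nth wf_t lt_c.
rewrite /new_cliques count_map.
under eq_count => w do rewrite /= in_cons.
case: eqP => _ /=; first by rewrite count_predT size_iota.
by rewrite -[X in iota 0 X]size_K count_mem_take_dropS // size_K.
Qed.

Definition cliques_with (k j : nat) (t : seq (nat * nat)) : nat :=
  count (fun K => (true, j) \in K) (cur_cliques k t).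

Lemma cliques_with_rcons k j t c p : cliques_with k j (rcons t (c, p)) =
  cliques_with k j t + count (fun K => (true, j) \in K) (new_cliques k t c).
Proof. by rewrite /cliques_with cur_cliques_rcons count_cat. Qed.

Lemma mem_treesS k n t' : t' \in trees k n.+1 ->
  exists t c p, [/\ t \in trees k n, c < 1 + k * n & t' = rcons t (c, p)].
Proof.
move=> /flattenP [_ /mapP [t t_n ->] /flattenP [_ /mapP [c lt_c ->] /mapP [p _ ->]]].
by exists t, c, p; rewrite mem_iota in lt_c.
Qed.

Lemma trees_wf k n t : t \in trees k n ->
  [/\ size t = n, choices_bounded k t & wf_tree k t].
Proof.
elim: n t => [|n IH] t; first by rewrite inE => /eqP ->; split=> //; apply: wf_tree_nil.
move=> /mem_treesS [t0 [c [p [t0_n lt_c ->]]]].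
have [size_t0 bounded wf_t0] := IH _ t0_n; rewrite -size_t0 in lt_c.
split; [by rewrite size_rcons size_t0 | | exact: wf_tree_rcons].
have le_bound : 1 + k * size t0 <= 1 + k * (size t0).+1.
  by rewrite leq_add2l leq_mul2l leqnSn orbT.
rewrite /choices_bounded all_rcons size_rcons /= (leq_trans lt_c le_bound).
by apply: sub_all bounded => q /= /leq_trans; apply.
Qed.

Lemma outdeg_trees_fresh k j n t : t \in trees k n -> n <= j -> outdeg k t (true, j) = 0.
Proof.
elim: n t => [|n IH] t; first by rewrite inE => /eqP ->.
move=> /mem_treesS [t0 [c [p [t0_n lt_c ->]]]] lt_nj.
have [size_t0 bounded wf_t0] := trees_wf t0_n; rewrite -size_t0 in lt_c.
rewrite outdeg_rcons // (IH _ t0_n (ltnW lt_nj)).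
by rewrite (negbTE (wf_clique_notin (wf_clique_nth wf_t0 lt_c) _)) // size_t0.
Qed.

Lemma cliques_with_trees_fresh k j n t : 0 < j -> t \in trees k n -> n < j ->
  cliques_with k j t = 0.
Proof.
move=> j_gt0; elim: n t => [|n IH] t.
  rewrite inE => /eqP -> _; apply/eqP; rewrite /cliques_with /= addn0 eqb0.
  by apply/mapP => -[l _].
move=> /mem_treesS [t0 [c [p [t0_n lt_c ->]]]] lt_nj.
have [size_t0 bounded wf_t0] := trees_wf t0_n; rewrite -size_t0 in lt_c.
rewrite cliques_with_rcons count_mem_new_cliques // (IH _ t0_n (ltnW lt_nj)).
rewrite (negbTE (wf_clique_notin (wf_clique_nth wf_t0 lt_c) _)) ?size_t0 ?(ltnW lt_nj) //.
by case: eqP => // -[eq_j]; rewrite eq_j ltnn in lt_nj.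
Qed.

Lemma cliques_with_trees k j n t : 0 < j -> t \in trees k n -> j <= n ->
  cliques_with k j t = k + k.-1 * outdeg k t (true, j).
Proof.
move=> j_gt0; elim: n t => [|n IH] t; first by rewrite leqNgt j_gt0.
move=> /mem_treesS [t0 [c [p [t0_n lt_c ->]]]] le_jn.
have [size_t0 bounded wf_t0] := trees_wf t0_n; rewrite -size_t0 in lt_c.
rewrite cliques_with_rcons count_mem_new_cliques // outdeg_rcons // size_t0.
have [-> | ne_jn] := eqVneq j n.+1.
  rewrite eqxx (cliques_with_trees_fresh _ t0_n) // (outdeg_trees_fresh t0_n) //.
  rewrite (negbTE (wf_clique_notin (wf_clique_nth wf_t0 lt_c) _)) ?size_t0 //.
  by rewrite !add0n /= muln0 addn0.
have le_jn' : j <= n by rewrite -ltnS ltn_neqAle ne_jn.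
have -> : ((true, j) == (true, n.+1)) = false by apply/eqP => -[/eqP]; apply/negP.
by rewrite (IH _ t0_n le_jn') mulnDr addnA (mulnC _ k.-1).
Qed.

Lemma count_treesS k n (P : pred (seq (nat * nat))) :
  count P (trees k n.+1) = \sum_(t <- trees k n) \sum_(c <- iota 0 (1 + k * n))
     \sum_(p <- iota 0 (nchildren t c).+1) P (rcons t (c, p)).
Proof.
have -> : trees k n.+1 = flatten [seq [seq rcons t (c, p) | c <- iota 0 (1 + k * n),
                                    p <- iota 0 (nchildren t c).+1] | t <- trees k n] by [].
rewrite count_flatten sumnE !big_map; apply: eq_bigr => t _.
rewrite count_flatten sumnE !big_map; apply: eq_bigr => c _.
by rewrite count_map count_sumE.
Qed.

Lemma sum_nchildren (F : nat -> nat) t M : all (fun q => q.1 < M) t ->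
  \sum_(c <- iota 0 M) F c * nchildren t c = \sum_(q <- t) F q.1.
Proof.
elim: t => [|q t IH] /=; first by move=> _; rewrite big_nil big1 // => c _; rewrite muln0.
move=> /andP [lt_q bounded]; rewrite big_cons -IH // /nchildren /=.
under eq_bigr => c _ do rewrite mulnDr.
rewrite big_split /= (bigD1_seq q.1) ?iota_uniq ?mem_iota //= eqxx muln1.
by rewrite big1 ?addn0 // => c /negbTE; rewrite eq_sym => ->; rewrite muln0.
Qed.

Lemma sum_positions k n t : t \in trees k n ->
  \sum_(c <- iota 0 (1 + k * n)) (nchildren t c).+1 = 1 + k.+1 * n.
Proof.
move=> /trees_wf [size_t bounded _].
under eq_bigr => c _ do rewrite -addn1 -[nchildren t c]mul1n.
rewrite big_split sum_nchildren -?size_t // sum1_size sum_nat_const_seq size_iota.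
by rewrite muln1 size_t mulSn addnCA.
Qed.

Lemma sum_positions_mem k j n t : 0 < k -> 0 < j -> j <= n -> t \in trees k n ->
  \sum_(c <- iota 0 (1 + k * n))
     ((true, j) \in nth [::] (cur_cliques k t) c) * (nchildren t c).+1
  = k * (outdeg k t (true, j)).+1.
Proof.
move=> k_gt0 j_gt0 le_jn t_n; have [size_t bounded _] := trees_wf t_n.
under eq_bigr => c _ do rewrite -addn1 mulnDr muln1.
rewrite big_split sum_nchildren -?size_t // -count_sumE -outdeg_countE.
have -> : \sum_(c <- iota 0 (1 + k * size t)) ((true, j) \in nth [::] (cur_cliques k t) c)
          = cliques_with k j t.
  rewrite /cliques_with -[in RHS](mkseq_nth [::] (cur_cliques k t)) /mkseq count_map.
  by rewrite count_sumE size_cliques.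
rewrite (cliques_with_trees j_gt0 t_n le_jn); set d := outdeg _ _ _.
by change (d + (k + k.-1 * d) = k * d.+1); nia.
Qed.

Lemma sum_extensions_outdeg k j n m t : 0 < k -> 0 < j -> j <= n -> t \in trees k n ->
  let d := outdeg k t (true, j) in
  \sum_(c <- iota 0 (1 + k * n)) \sum_(p <- iota 0 (nchildren t c).+1)
     (outdeg k (rcons t (c, p)) (true, j) == m)
  = (d == m) * (1 + k.+1 * n - k * d.+1) + (d.+1 == m) * (k * d.+1).
Proof.
move=> k_gt0 j_gt0 le_jn t_n d; have [size_t bounded _] := trees_wf t_n.
pose b c := (true, j) \in nth [::] (cur_cliques k t) c.
pose w c := (nchildren t c).+1.
have total : \sum_(c <- iota 0 (1 + k * n)) w c = 1 + k.+1 * n := sum_positions t_n.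
have mem : \sum_(c <- iota 0 (1 + k * n)) b c * w c = k * d.+1 :=
  sum_positions_mem k_gt0 j_gt0 le_jn t_n.
have split_w : \sum_(c <- iota 0 (1 + k * n)) ~~ b c * w c + k * d.+1 = 1 + k.+1 * n.
  rewrite -mem -total -big_split; apply: eq_bigr => c _.
  by case: (b c) => /=; rewrite ?mul0n ?mul1n ?add0n ?addn0.
rewrite (eq_big_seq (fun c => (d == m) * (~~ b c * w c) + (d.+1 == m) * (b c * w c))).
  by rewrite big_split -!big_distrr mem -split_w addnK.
move=> c; rewrite mem_iota add0n => lt_c.
under eq_bigr => p _ do rewrite outdeg_rcons ?size_t //.
rewrite sum_nat_const_seq size_iota -/d -/(w c) -/(b c).
by case: (b c) => /=; rewrite ?addn0 ?addn1 ?mul0n ?mul1n ?muln0 ?add0n ?addn0 mulnC.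
Qed.

Lemma Tcount_S k n : Tcount k n.+1 = Tcount k n * (1 + k.+1 * n).
Proof.
rewrite /Tcount -!count_predT count_treesS.
rewrite (eq_big_seq (fun=> 1 + k.+1 * n)) ?sum_nat_const_seq ?count_predT // => t t_n.
rewrite -(sum_positions t_n); apply: eq_bigr => c _.
by rewrite sum_nat_const_seq size_iota muln1.
Qed.

Lemma Tcount_prod k j : Tcount k j = \prod_(l < j) (1 + k.+1 * l).
Proof. by elim: j => [|j IH]; rewrite ?big_ord0 // Tcount_S IH big_ord_recr. Qed.

Lemma Tnjm_diag k j m : Tnjm k j j m = (m == 0) * Tcount k j.
Proof.
rewrite /Tnjm /Tcount (eq_in_count (a2 := fun=> m == 0)) => [|t t_j].
  by case: (m == 0); rewrite ?mul1n ?mul0n; [apply: count_predT | apply: count_pred0].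
by rewrite (outdeg_trees_fresh t_j) // eq_sym.
Qed.

Lemma outdeg_trees_bound k j n t : 0 < k -> 0 < j -> j <= n -> t \in trees k n ->
  k * (outdeg k t (true, j)).+1 <= 1 + k.+1 * n.
Proof.
move=> k_gt0 j_gt0 le_jn t_n.
rewrite -(sum_positions_mem k_gt0 j_gt0 le_jn t_n) -(sum_positions t_n).
by apply: leq_sum => c _; case: (_ \in _); rewrite ?mul0n ?mul1n.
Qed.

Local Open Scope ring_scope.

Lemma natr_extensions_outdeg (R : comPzRingType) (k n d m : nat) :
  (k * d.+1 <= 1 + k.+1 * n)%N ->
  (((d == m) * (1 + k.+1 * n - k * d.+1) + (d.+1 == m) * (k * d.+1))%N%:R : R) =
  ((k.+1 * n.+1)%N%:R - (k * m)%N%:R - (2 * k)%N%:R) * (d == m)%:R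
    + (k * m)%N%:R * (d.+1 == m)%:R.
Proof.
move=> le_kd; have [<- | _] := eqVneq d m.
  rewrite eq_sym (ltn_eqF (ltnSn d)) mul1n mul0n addn0 mulr1 mulr0 addr0.
  by rewrite natrB //; ring.
rewrite mul0n add0n.
by have [<- | _] := eqVneq d.+1 m => /=; ring.
Qed.

Lemma Tnjm_S (R : comPzRingType) k n j m : (0 < k)%N -> (0 < j)%N -> (j <= n)%N ->
  (Tnjm k n.+1 j m)%:R =
    ((k.+1 * n.+1)%N%:R - (k * m)%N%:R - (2 * k)%N%:R) * (Tnjm k n j m)%:R
    + (k * m)%N%:R * (if m is m'.+1 then (Tnjm k n j m')%:R else 0) :> R.
Proof.
move=> k_gt0 j_gt0 le_jn.
have -> : (if m is m'.+1 then (Tnjm k n j m')%:R else 0 : R)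
          = (count (fun t => (outdeg k t (true, j)).+1 == m) (trees k n))%:R.
  case: m => [|m]; last by rewrite /Tnjm.
  by rewrite (@eq_count _ _ pred0) ?count_pred0.
rewrite /Tnjm count_treesS !count_sumE !natr_sum !mulr_sumr -big_split.
apply: eq_big_seq => t t_n; rewrite sum_extensions_outdeg //.
exact/natr_extensions_outdeg/outdeg_trees_bound.
Qed.

Lemma powS0 c a : powS c a 0 = 1.
Proof. by rewrite /powS /gbinom big_ord0 fact0 divr1 mul1r. Qed.

Lemma powS_rec c a n : n.+1%:R * powS c a n.+1 = c * (n%:R - a) * powS c a n.
Proof.
rewrite /powS /gbinom big_ord_recr /= factS natrM exprS.
by field; rewrite nat1r !pnatr_eq0 -lt0n fact_gt0.
Qed.

Section Agreement.
Variable R : nzRingType.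

Definition agree (L : nat) (p q : {poly R}) := forall i, (i < L)%N -> p`_i = q`_i.

Lemma agree_trans L p q r : agree L p q -> agree L q r -> agree L p r.
Proof. by move=> pq qr i lt_iL; rewrite pq // qr. Qed.

Lemma agreeD L p q r s : agree L p q -> agree L r s -> agree L (p + r) (q + s).
Proof. by move=> pq rs i lt_iL; rewrite !coefD pq // rs. Qed.

Lemma agreeMn L p q n : agree L p q -> agree L (p *+ n) (q *+ n).
Proof. by move=> pq i lt_iL; rewrite !coefMn pq. Qed.

Lemma agreeMr L p q r : agree L p q -> agree L (p * r) (q * r).
Proof.
move=> pq i lt_iL; rewrite !coefM; apply: eq_bigr => l _.
by rewrite pq // (leq_ltn_trans _ lt_iL) // -ltnS.
Qed.

Lemma agreeMl L p q r : agree L p q -> agree L (r * p) (r * q).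
Proof.
move=> pq i lt_iL; rewrite !coefM; apply: eq_bigr => l _.
by rewrite pq // (leq_ltn_trans (leq_subr _ _) lt_iL).
Qed.

End Agreement.

Definition trunc (L : nat) (f : fps) : {poly rat} := \poly_(i < L) f i.

Lemma coef_trunc L f i : (i < L)%N -> (trunc L f)`_i = f i.
Proof. by move=> lt_iL; rewrite coef_poly lt_iL. Qed.

Lemma fmul_coef L f g (p q : {poly rat}) :
  (forall i, (i < L)%N -> f i = p`_i) -> (forall i, (i < L)%N -> g i = q`_i) ->
  forall i, (i < L)%N -> fmul f g i = (p * q)`_i.
Proof.
move=> fp gq i lt_iL; rewrite coefM /fmul; apply: eq_bigr => l _.
rewrite fp ?gq ?(leq_ltn_trans (leq_subr _ _) lt_iL) //.
by rewrite (leq_ltn_trans _ lt_iL) // -ltnS.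
Qed.

Lemma fpow_coef L f (p : {poly rat}) m :
  (forall i, (i < L)%N -> f i = p`_i) ->
  forall i, (i < L)%N -> fpow f m i = (p ^+ m)`_i.
Proof.
move=> fp; elim: m => [|m IH] i lt_iL; first by rewrite expr0 coef1.
by rewrite exprS -(fmul_coef fp IH lt_iL).
Qed.

Definition upol (c : rat) : {poly rat} := 1 - c *: 'X.

Lemma coef_upolM c (q : {poly rat}) i :
  (upol c * q)`_i = q`_i - (if i is i'.+1 then c * q`_i' else 0).
Proof.
rewrite /upol mulrBl mul1r coefB -scalerAl coefZ coefXM.
by case: i => [|i]; rewrite ?mulr0.
Qed.

Lemma trunc_powS_ode L c a :
  agree L (upol c * (trunc L.+1 (powS c a))^`()) (- (c * a) *: trunc L.+1 (powS c a)).
Proof.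
move=> i lt_iL; rewrite coef_upolM coefZ coef_deriv !coef_trunc ?ltnS ?(ltnW lt_iL) //.
rewrite -mulr_natl powS_rec; case: i lt_iL => [|i] lt_iL; first by ring.
by rewrite coef_deriv coef_trunc ?ltnS ?(ltnW lt_iL) // -mulr_natl; ring.
Qed.

Definition gpol (L : nat) (c b e : rat) (m : nat) : {poly rat} :=
  (1 - trunc L.+1 (powS c b)) ^+ m * trunc L.+1 (powS c e).

Lemma gpol_ode L c b e m :
  agree L (upol c * (gpol L c b e m)^`())
    ((c * b * m%:R) *: gpol L c b e m.-1 + (- (c * e) - c * b * m%:R) *: gpol L c b e m).
Proof.
set Pb := trunc L.+1 (powS c b); set B := trunc L.+1 (powS c e); set A := 1 - Pb.
have odeA : agree L (upol c * A^`()) ((c * b) *: Pb).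
  move=> i lt_iL; rewrite /A derivB -polyC1 derivC sub0r mulrN coefN.
  by rewrite trunc_powS_ode // !coefZ mulNr opprK.
rewrite /gpol -/Pb -/B -/A derivM deriv_exp mulrDr.
apply: (@agree_trans _ _ _ ((c * b) *: Pb * (A ^+ m.-1 * B) *+ m + A ^+ m * (- (c * e) *: B))).
  apply: agreeD; last by rewrite mulrCA; apply/agreeMl/trunc_powS_ode.
  rewrite mulrnAl mulrnAr -(mulrA (A^`())) (mulrA (upol c)).
  exact/agreeMn/agreeMr.
have -> : Pb = 1 - A by rewrite /A subKr.
apply: (fun E i _ => congr1 (fun p : {poly rat} => p`_i) E); rewrite -!mul_polyC.
by case: m => [|m]; rewrite /= ?exprS; ring.
Qed.

Lemma coef_gpol_rec L c b e m N : (N < L)%N ->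
  N.+1%:R * (gpol L c b e m)`_N.+1 =
    c * N%:R * (gpol L c b e m)`_N + c * b * m%:R * (gpol L c b e m.-1)`_N
    + (- (c * e) - c * b * m%:R) * (gpol L c b e m)`_N.
Proof.
move=> lt_NL; have := @gpol_ode L c b e m N lt_NL.
rewrite coef_upolM coefD !coefZ; case: N lt_NL => [|N] _; rewrite !coef_deriv;
  by move=> /eqP; rewrite subr_eq => /eqP ode; rewrite [LHS]mulr_natl ode; ring.
Qed.

Definition gf (c b e : rat) (m : nat) : fps :=
  fmul (fpow (fun i => fone i - powS c b i) m) (powS c e).

Lemma gf_gpol L c b e m N : (N <= L)%N -> gf c b e m N = (gpol L c b e m)`_N.
Proof.
move=> le_NL; apply: (@fmul_coef L.+1) => // i lt_i; last by rewrite coef_trunc.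
by apply: (@fpow_coef L.+1) => // i' lt_i'; rewrite coefB coef1 coef_trunc.
Qed.

Lemma gf0 c b e m : gf c b e m 0 = (m == 0)%:R.
Proof.
have fpow0 f n : fpow f n 0 = f 0 ^+ n.
  by elim: n => [|n IH] //; rewrite /fpow iterS -/(fpow f n) /fmul big_ord1 subnn IH exprS.
by rewrite /gf /fmul big_ord1 subnn fpow0 !powS0 /fone eqxx subrr mulr1 expr0n.
Qed.

Lemma gfS c b e m N :
  N.+1%:R * gf c b e m N.+1 =
    c * N%:R * gf c b e m N + c * b * m%:R * gf c b e m.-1 N
    + (- (c * e) - c * b * m%:R) * gf c b e m N.
Proof. by rewrite !(@gf_gpol N.+1) // coef_gpol_rec. Qed.

Lemma Tnjm_gf k j m N : (0 < k)%N -> (0 < j)%N ->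
  (Tnjm k (j + N) j m)%:R / N`!%:R =
    (Tcount k j)%:R * gf (k.+1)%:R (k%:R / (k.+1)%:R)
                         (- ((k * j - k + j + 1)%N%:R / (k.+1)%:R)) m N.
Proof.
move=> k_gt0 j_gt0; set c : rat := (k.+1)%:R; set b := _ / c; set e := - _.
have nz_c : c != 0 by rewrite pnatr_eq0.
have nz_fact n : n`!%:R != 0 :> rat by rewrite pnatr_eq0 -lt0n fact_gt0.
have cb : c * b = k%:R by rewrite /b mulrC divfK.
have ce : - (c * e) = k%:R * j%:R - k%:R + j%:R + 1.
  by rewrite /e mulrN opprK mulrC divfK // !natrD natrB ?leq_pmulr // natrM.
elim: N m => [|N IH] m; first by rewrite addn0 Tnjm_diag gf0 fact0 divr1 natrM mulrC.
have T_gf m' : (Tnjm k (j + N) j m')%:R = (Tcount k j)%:R * gf c b e m' N * N`!%:R.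
  by rewrite -IH divfK.
have gfN1 : gf c b e m N.+1 =
    (c * N%:R * gf c b e m N + c * b * m%:R * gf c b e m.-1 N
     + (- (c * e) - c * b * m%:R) * gf c b e m N) / N.+1%:R.
  by rewrite -gfS mulrC mulKf // pnatr_eq0.
rewrite addnS Tnjm_S ?leq_addr // factS natrM gfN1 cb ce.
by case: m {gfN1} => [|m]; rewrite !T_gf /c; field; rewrite nat1r pnatr_eq0 nz_fact.
Qed.

Theorem mainTheorem11 (k : nat) (hk : (1 <= k)%N) :
  (forall n j m : nat, (1 <= j)%N -> (j < n)%N ->
     (Tnjm k n j m)%:Z =
       (((k.+1 * n)%N)%:Z - ((k * m)%N)%:Z - ((2 * k)%N)%:Z) * (Tnjm k n.-1 j m)%:Z
       + ((k * m)%N)%:Z * (if m is m'.+1 then (Tnjm k n.-1 j m')%:Z else 0%R))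
  /\
  (forall j : nat, Tcount k j = (\prod_(l < j) (1 + k.+1 * l))%N)
  /\
  (forall j m N : nat, (1 <= j)%N ->
     ((Tnjm k (j + N) j m)%:R / (N`!)%:R : rat) =
       (Tcount k j)%:R *
       fmul (fpow (fun i => fone i - powS (k.+1)%:R (k%:R / (k.+1)%:R) i) m)
            (powS (k.+1)%:R (- (((k * j - k + j + 1)%N)%:R / (k.+1)%:R))) N).
Proof.
split; last split; [|exact: Tcount_prod | by move=> j m N j_gt0; apply: Tnjm_gf].
move=> [//|n] j [|m] j_gt0 lt_jn; rewrite -!natz Tnjm_S //.
Qed.
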